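(* Let $f\colon\mathbb{R}^n\to\mathbb{R}$ be continuous and suppose there is $\gamma>0$ such that (i) the set $S_\gamma=\{z\in\mathbb{R}^n : f(z)\le\inf f+\gamma\}$ is compact, and (ii) every $x\in S_\gamma$ with $0\in\partial f(x)$ is a global minimizer of $f$. Let $t\in(0,\infty)$ and let $x\in\mathbb{R}^n$ be a local minimizer of $u(\cdot,t)$. Then $x$ is a local minimizer of $f$, $u(x,t)=f(x)$, $\operatorname{prox}_{tf}(x)=\{x\}$, $u(\cdot,t)$ is differentiable at $x$, and $\nabla u(x,t)=0$.
   Context: $\operatorname{prox}_{tf}(x)=\operatorname{argmin}_{z\in\mathbb{R}^n}\big(f(z)+\frac{1}{2t}\|z-x\|^2\big)$ and $u(x,t)=\inf_{z\in\mathbb{R}^n}\big(f(z)+\frac{1}{2t}\|z-x\|^2\big)$; $\nabla u$ denotes the gradient in $x$. The subdifferential $\partial f(\bar x)$ is the set of all $v\in\mathbb{R}^n$ such that $f(x)\ge f(\bar x)+\langle v,x-\bar x\rangle+o(\|x-\bar x\|)$ as $x\to\bar x$. *)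

From HB Require Import structures.
From mathcomp Require Import all_boot all_order all_algebra.
From mathcomp Require Import all_classical all_reals all_analysis.
Set Implicit Arguments. Unset Strict Implicit. Unset Printing Implicit Defensive.
Import Order.TTheory GRing.Theory Num.Theory.
Import numFieldNormedType.Exports.
Local Open Scope classical_set_scope.
Local Open Scope ring_scope.

Definition dotv {R : realType} {n : nat} (v w : 'rV[R]_n) : R :=
  \sum_(i < n) v ord0 i * w ord0 i.
Definition sqnorm {R : realType} {n : nat} (v : 'rV[R]_n) : R := dotv v v.
Definition enorm {R : realType} {n : nat} (v : 'rV[R]_n) : R := Num.sqrt (sqnorm v).

Definition mobj {R : realType} {n : nat} (f : 'rV[R]_n -> R) (x : 'rV[R]_n) (t : R)
  (z : 'rV[R]_n) : R := f z + sqnorm (z - x) / (2 * t).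

(* u(x,t) = inf_z (f z + |z-x|^2/(2t)) *)
Definition moreau {R : realType} {n : nat} (f : 'rV[R]_n -> R) (x : 'rV[R]_n) (t : R) : R :=
  inf (range (mobj f x t)).

Definition prox {R : realType} {n : nat} (f : 'rV[R]_n -> R) (t : R) (x : 'rV[R]_n)
  : set 'rV[R]_n :=
  [set z | forall w, mobj f x t z <= mobj f x t w].

(* (Fréchet) subdifferential: f y >= f xb + <v, y - xb> + o(|y - xb|) *)
Definition subdiff {R : realType} {n : nat} (f : 'rV[R]_n -> R) (xb : 'rV[R]_n)
  : set 'rV[R]_n :=
  [set v | forall eps : R, 0 < eps ->
     \forall y \near xb, f xb + dotv v (y - xb) - eps * enorm (y - xb) <= f y].

Definition local_min {R : realType} {n : nat} (g : 'rV[R]_n -> R) (x : 'rV[R]_n) : Prop :=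
  \forall y \near x, g x <= g y.

Definition global_min {R : realType} {n : nat} (g : 'rV[R]_n -> R) (x : 'rV[R]_n) : Prop :=
  forall y, g x <= g y.

Definition sublev {R : realType} {n : nat} (f : 'rV[R]_n -> R) (gamma : R) : set 'rV[R]_n :=
  [set z | f z <= inf (range f) + gamma].

From HB Require Import structures.
From mathcomp Require Import all_boot all_order all_algebra.
From mathcomp Require Import all_classical all_reals all_analysis.
From mathcomp Require Import ring lra.
Import Order.TTheory GRing.Theory Num.Theory.
Import numFieldNormedType.Exports.
Local Open Scope classical_set_scope.
Local Open Scope ring_scope.

(* Let x minimize u = u(., t) on the ball of radius d. Comparing u x with
   u (x + s (z - x)) <= f z + (1 - s)^2 |z - x|^2 / (2t) shows that the
   objective z |-> f z + |z - x|^2 / (2t) exceeds u x by at least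
   s |z - x|^2 / (2t) whenever s |z - x| < d. Hence its almost-minimizers
   concentrate at x, which with continuity of f gives u x = f x, and it has
   no exact minimizer besides x. Then u x <= u y <= f x + |y - x|^2 / (2t)
   near x, so u is differentiable at x with zero derivative. *)

Section SquaredNorm.
Context {R : realType} {n : nat}.
Implicit Types v : 'rV[R]_n.

Lemma sqnorm_ge0 v : 0 <= sqnorm v.
Proof. by apply: sumr_ge0 => i _; rewrite -expr2 sqr_ge0. Qed.

Lemma sqnormZ (a : R) v : sqnorm (a *: v) = a ^+ 2 * sqnorm v.
Proof.
rewrite /sqnorm /dotv mulr_sumr; apply: eq_bigr => i _; rewrite !mxE.
by rewrite mulrACA expr2.
Qed.

Lemma sqnorm0 : sqnorm (0 : 'rV[R]_n) = 0.
Proof. by rewrite -(scale0r 0) sqnormZ expr2 !mul0r. Qed.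

Lemma sqnormN v : sqnorm (- v) = sqnorm v.
Proof. by rewrite -scaleN1r sqnormZ sqrrN expr1n mul1r. Qed.

Lemma coord_le_norm v i : `|v ord0 i| <= `|v|.
Proof.
have /mapP[j Hj ->] : `|v ord0 i| \in [seq `|v x.1 x.2| | x : 'I_1 * 'I_n].
  by apply/mapP; exists (ord0, i) => //=; rewrite mem_enum.
rewrite [leRHS]/Num.Def.normr /= mx_normrE.
by apply/bigmax_geP; right => /=; exists j.
Qed.

Lemma sqr_norm_le_sqnorm v : `|v| ^+ 2 <= sqnorm v.
Proof.
have [->|v0] := eqVneq v 0; first by rewrite normr0 expr2 mul0r sqnorm0.
have : mx_norm v != 0 by rewrite -[mx_norm v]/(`|v|) normr_eq0.
move=> /mx_norm_neq0 [[i j]] /= E.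
rewrite -[`|v|]/(mx_norm v) E ord1 real_normK ?num_real //.
rewrite /sqnorm /dotv (bigD1 j) //= -expr2 lerDl.
by apply: sumr_ge0 => k _; rewrite -expr2 sqr_ge0.
Qed.

Lemma sqnorm_le_sqr_norm v : sqnorm v <= n%:R * `|v| ^+ 2.
Proof.
rewrite /sqnorm /dotv mulr_natl -[X in _ *+ X]card_ord -sumr_const.
apply: ler_sum => i _; rewrite -expr2 -real_normK ?num_real //.
by rewrite lerXn2r ?nnegrE ?coord_le_norm.
Qed.

End SquaredNorm.

Lemma quadratic_bound_diff0 {R : realType} {V : normedModType R} {g : V -> R}
    {x : V} {C : R} :
  (\forall y \near x, `|g y - g x| <= C * `|y - x| ^+ 2) ->
  differentiable g x /\ 'd g x = 0 :> (V -> R).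
Proof.
move=> gC.
have g_flat : g \o shift x = cst (g x) + (0 : V -> R) +o_ 0 id.
  apply/eqaddoP => e e0; rewrite near_simpl (near_shift x) sub0r.
  have C1 : 0 < `|C| + 1 by rewrite ltr_pwDr ?normr_ge0.
  near=> y; rewrite /= !fctE addr0 subrK.
  have yx_small : `|y - x| <= e / (`|C| + 1).
    near: y; apply/nbhs_ballP; exists (e / (`|C| + 1)); first exact: divr_gt0.
    by move=> y; rewrite -ball_normE /= distrC => /ltW.
  apply: le_trans (_ : C * `|y - x| ^+ 2 <= _); first by near: y.
  rewrite ler_pdivlMr // in yx_small.
  have := normr_ge0 (y - x); have := ler_norm C; nra.
have d0 : 'd g x = 0 :> (V -> R).
  by apply: diff_unique => //; exact: cst_continuous.
split; last by [].
by apply/diff_locallyP; rewrite d0; split=> //; exact: cst_continuous.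
Unshelve. all: by end_near.
Qed.

Section MoreauEnvelope.
Context {R : realType} {n : nat} {f : 'rV[R]_n -> R} {t : R}.
Hypotheses (t_gt0 : 0 < t) (f_lb : has_lbound (range f)).
Implicit Types x y z : 'rV[R]_n.

Let t2_gt0 : 0 < 2 * t. Proof. by rewrite mulr_gt0. Qed.

Lemma mobj_ge y z : f z <= mobj f y t z.
Proof. by rewrite /mobj lerDl divr_ge0 ?sqnorm_ge0 ?ltW. Qed.

Lemma mobjxx y : mobj f y t y = f y.
Proof. by rewrite /mobj subrr sqnorm0 mul0r addr0. Qed.

Lemma has_inf_mobj y : has_inf (range (mobj f y t)).
Proof.
split; first by exists (mobj f y t y), y.
case: f_lb => m m_lb; exists m => _ [z _ <-].
by apply: le_trans (mobj_ge y z); apply: m_lb; exists z.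
Qed.

Lemma moreau_le_mobj y z : moreau f y t <= mobj f y t z.
Proof. by apply: ge_inf; [case: (has_inf_mobj y) | exists z]. Qed.

Lemma moreau_le y : moreau f y t <= f y.
Proof. by rewrite -mobjxx moreau_le_mobj. Qed.

Section LocalMinimizer.
Context {x : 'rV[R]_n} {d : R}.
Hypotheses (d_gt0 : 0 < d)
  (x_min : forall y, `|y - x| < d -> moreau f x t <= moreau f y t).

Let d2_lt : d / 2 < d. Proof. by rewrite ltr_pdivrMr // ltr_pMr // ltr1n. Qed.

Lemma moreau_addr_le_mobj s z : 0 < s <= 1 -> s * `|z - x| < d ->
  moreau f x t + s * (sqnorm (z - x) / (2 * t)) <= mobj f x t z.
Proof.
move=> /andP[s_gt0 s_le1] sz_lt.
pose y := x + s *: (z - x).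
have y_near : `|y - x| < d by rewrite /y addrC addKr normrZ gtr0_norm.
have zy : z - y = (1 - s) *: (z - x) by rewrite /y scalerBl scale1r opprD addrA.
have := le_trans (x_min _ y_near) (moreau_le_mobj y z).
rewrite /mobj zy sqnormZ -mulrA.
have q_ge0 : 0 <= sqnorm (z - x) / (2 * t) by rewrite divr_ge0 ?sqnorm_ge0 ?ltW.
have : 0 <= s * (1 - s) by apply: mulr_ge0; [exact: ltW | rewrite subr_ge0].
nra.
Qed.

Lemma moreau_addr_sqr_le_mobj rho z : 0 < rho < d -> rho <= `|z - x| ->
  moreau f x t + rho ^+ 2 / (2 * t) <= mobj f x t z.
Proof.
move=> /andP[rho_gt0 rho_lt] rho_le.
have N_gt0 : 0 < `|z - x| by apply: lt_le_trans rho_le.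
have := moreau_addr_le_mobj (rho / `|z - x|) z.
rewrite divfK ?gt_eqF // divr_gt0 // ler_pdivrMr // mul1r rho_le.
move=> /(_ isT rho_lt); apply: le_trans.
rewrite lerD2l mulrA ler_pM2r ?invr_gt0 //.
apply: (@le_trans _ _ (rho / `|z - x| * `|z - x| ^+ 2)).
  by rewrite expr2 mulrA divfK ?gt_eqF // ler_pM2l.
by apply: ler_wpM2l; [rewrite divr_ge0 ?ltW | exact: sqr_norm_le_sqnorm].
Qed.

Lemma moreau_approx_near rho eps : 0 < rho < d -> 0 < eps ->
  exists2 z, `|z - x| < rho & f z < moreau f x t + eps.
Proof.
move=> rho_bounds eps_gt0; have /andP[rho_gt0 _] := rho_bounds.
pose e := Num.min eps (rho ^+ 2 / (2 * t)).
have e_gt0 : 0 < e by rewrite lt_min eps_gt0 divr_gt0 ?exprn_gt0.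
have [_ [z _ <-] z_approx] := inf_adherent e_gt0 (has_inf_mobj x).
exists z.
  rewrite ltNge; apply/negP => /(moreau_addr_sqr_le_mobj _ _ rho_bounds).
  apply/negP; rewrite -ltNge (lt_le_trans z_approx) //.
  by rewrite lerD2l ge_min lexx orbT.
apply: le_lt_trans (mobj_ge x z) (lt_le_trans z_approx _).
by rewrite lerD2l ge_min lexx.
Qed.

Hypothesis f_cont : {for x, continuous f}.

Lemma moreau_eq : moreau f x t = f x.
Proof.
apply/eqP; rewrite eq_le moreau_le /=; apply/ler_addgt0Pr => e e_gt0.
have e2_gt0 : 0 < e / 2 by rewrite divr_gt0.
have /nbhs_ballP[r /= r_gt0 f_near] : \forall z \near x, `|f x - f z| < e / 2.
  exact: cvgr_dist_lt _ _ f_cont _ e2_gt0.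
pose rho := Num.min r (d / 2).
have rho_bounds : 0 < rho < d.
  by rewrite lt_min r_gt0 divr_gt0 //= gt_min d2_lt orbT.
have [z zx fz] := moreau_approx_near _ _ rho_bounds e2_gt0.
have : `|f x - f z| < e / 2.
  apply: f_near; rewrite -ball_normE /= distrC (lt_le_trans zx) //.
  by rewrite ge_min lexx.
move=> /(le_lt_trans (ler_norm _)); lra.
Qed.

Lemma prox_eq : prox f t x = [set x].
Proof.
apply/seteqP; split => [z z_prox | _ ->]; last first.
  by move=> w; rewrite mobjxx -moreau_eq moreau_le_mobj.
have z_le : mobj f x t z <= moreau f x t.
  apply: lb_le_inf; first by case: (has_inf_mobj x).
  by move=> _ [w _ <-]; exact: z_prox.
have [//|zx] := eqVneq z x; exfalso.
pose rho := Num.min `|z - x| (d / 2).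
have rho_gt0 : 0 < rho by rewrite lt_min normr_gt0 subr_eq0 zx divr_gt0.
have rho_bounds : 0 < rho < d.
  by rewrite rho_gt0 /= gt_min d2_lt orbT.
have := moreau_addr_sqr_le_mobj _ z rho_bounds (ltac:(by rewrite ge_min lexx)).
have : 0 < rho ^+ 2 / (2 * t) by rewrite divr_gt0 ?exprn_gt0.
lra.
Qed.

Lemma local_min_f : local_min f x.
Proof.
apply/nbhs_ballP; exists d => // y; rewrite -ball_normE /= distrC => /x_min.
by rewrite moreau_eq => /le_trans; apply; exact: moreau_le.
Qed.

Lemma moreau_sqr_bound : \forall y \near x,
  `|moreau f y t - moreau f x t| <= n%:R / (2 * t) * `|y - x| ^+ 2.
Proof.
apply/nbhs_ballP; exists d => // y.
rewrite -ball_normE /= distrC => /x_min y_ge.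
rewrite ger0_norm ?subr_ge0 // lerBlDl.
apply: le_trans (moreau_le_mobj y x) _.
rewrite /mobj -opprB sqnormN -moreau_eq lerD2l mulrAC ler_pM2r ?invr_gt0 //.
exact: sqnorm_le_sqr_norm.
Qed.

End LocalMinimizer.
End MoreauEnvelope.

Theorem lemma4 (R : realType) (n : nat) (f : 'rV[R]_n -> R) (gamma t : R)
  (x : 'rV[R]_n) :
  continuous f ->
  has_lbound (range f) ->
  0 < gamma ->
  compact (sublev f gamma) ->
  (forall z, sublev f gamma z -> subdiff f z 0 -> global_min f z) ->
  0 < t ->
  local_min (fun y => moreau f y t) x ->
  [/\ local_min f x,
      moreau f x t = f x,
      prox f t x = [set x],
      differentiable (fun y => moreau f y t) x &
      forall v, 'd (fun y => moreau f y t) x v = 0].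
Proof.
move=> f_cont f_lb _ _ _ t_gt0 /nbhs_ballP[d /= d_gt0 u_min].
have x_min y : `|y - x| < d -> moreau f x t <= moreau f y t.
  by move=> yx; apply: u_min; rewrite -ball_normE /= distrC.
have [u_diff u_d0] := quadratic_bound_diff0
  (moreau_sqr_bound t_gt0 f_lb d_gt0 x_min (f_cont x)).
split.
- exact: (local_min_f t_gt0 f_lb d_gt0 x_min (f_cont x)).
- exact: (moreau_eq t_gt0 f_lb d_gt0 x_min (f_cont x)).
- exact: (prox_eq t_gt0 f_lb d_gt0 x_min (f_cont x)).
- exact: u_diff.
- by move=> v; rewrite u_d0.
Qed.
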